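(* Let $0<\delta_0<\pi/2$. Then $G(r,t)<\ln(7/6)$ for all $r\in[0,\pi+\delta_0)$ and all $t\ge0$. More precisely, $G(r,t)<\ln\bigl(\tfrac{2r_M\sin r_M}{\pi}\bigr)<\ln(7/6)$, where $r_M\in(\pi/2,\pi)$ is the solution of $r_M=-\tan r_M$.
   Context: Let $f(r)=-\dfrac{r\cos r\sin r}{r+\cos r\sin r}$ and $g(r)=-\dfrac{\cos r\,(r\cos r+\sin r)}{r+\cos r\sin r}$ (extended continuously at $r=0$). Let $F(r,t)$ denote the flow of the one-dimensional vector field $f(r)\partial_r$, i.e.\ the solution of $\partial_tF(r,t)=f(F(r,t))$, $F(r,0)=r$. Define $G(r,t)=\int_0^t g(F(r,s))\,ds$. *)

From Stdlib Require Import Reals.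
From Coquelicot Require Import Coquelicot.
Open Scope R_scope.

Definition f_vf (r : R) : R :=
  if Req_EM_T r 0 then 0
  else - (r * cos r * sin r) / (r + cos r * sin r).

Definition g_vf (r : R) : R :=
  if Req_EM_T r 0 then -1
  else - (cos r * (r * cos r + sin r)) / (r + cos r * sin r).

Definition is_flow_line (r : R) (u : R -> R) : Prop :=
  u 0 = r /\ forall t : R, is_derive u t (f_vf (u t)).

(* G(r,t) = int_0^t g(F(r,s)) ds along the flow line u = F(r, .). *)
Definition G_along (u : R -> R) (t : R) : R := RInt (fun s => g_vf (u s)) 0 t.

(* Write f = - sin cos / D and g = - cos (cos + sinc) / D with a
   continuous positive denominator D.  Along a flow line u, both
   sin u cos u and h(u) satisfy a linear ODE y' = m(u) y with continuous m,
   and the coefficient for h is exactly g.  Hence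
     - sin u cos u keeps the sign of sin r cos r: u is stationary when it
       vanishes, and otherwise u never leaves the open quarter period
       containing r and moves monotonically (left iff sin r cos r > 0);
     - h(u(t)) = h(r) exp G(r,t)   (the conservation law).
   Since 0 <= r < pi + delta0 < 3pi/2, only the first three quarters occur.
   On the first and third ones u moves in the direction making
   h(u)/h(r) <= 1, i.e. G <= 0.  On (pi/2, pi) u moves right; left of r_M
   we have h(r) > h(pi/2) = pi/2 and h(u(t)) <= h(r_M), right of r_M h
   decreases.  Hence exp G < 2 h(r_M)/pi in all cases.  Finally
   2.025 < r_M < 2.035 numerically, which gives 2 h(r_M)/pi < 7/6. *)

From Stdlib Require Import Reals Lra Psatz.
From Coquelicot Require Import Coquelicot.
Open Scope R_scope.

Lemma mvt_open (F dF : R -> R) a b :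
  a < b -> (forall z, is_derive F z (dF z)) ->
  exists c, a < c < b /\ F b - F a = dF c * (b - a).
Proof.
  intros Hab HF.
  destruct (MVT_cor2 F dF a b Hab) as [c [E Hc]].
  - intros c _. apply is_derive_Reals, HF.
  - exists c. split; assumption.
Qed.

Lemma incr_of_deriv (F dF : R -> R) a b :
  (forall z, is_derive F z (dF z)) -> (forall z, a < z < b -> 0 <= dF z) ->
  forall x y, a <= x -> x <= y -> y <= b -> F x <= F y.
Proof.
  intros HF Hpos x y Hax Hxy Hyb.
  destruct (Req_dec x y) as [<-|Hne]; [lra|].
  destruct (mvt_open F dF x y) as [c [Hc E]]; [lra|exact HF|].
  specialize (Hpos c ltac:(lra)). nra.
Qed.

Lemma decr_of_deriv (F dF : R -> R) a b :
  (forall z, is_derive F z (dF z)) -> (forall z, a < z < b -> dF z <= 0) ->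
  forall x y, a <= x -> x <= y -> y <= b -> F y <= F x.
Proof.
  intros HF Hneg x y Hax Hxy Hyb.
  assert (Hopp : forall z, is_derive (fun z => - F z) z (- dF z)).
  { intros z. apply (is_derive_opp F), HF. }
  pose proof (incr_of_deriv _ _ a b Hopp ltac:(intros z Hz; specialize (Hneg z Hz); lra)
                x y Hax Hxy Hyb).
  lra.
Qed.

Lemma const_of_deriv0 (F : R -> R) :
  (forall z, is_derive F z 0) -> forall x y, F x = F y.
Proof.
  intros HF.
  assert (Hle : forall x y, x <= y -> F x = F y).
  { intros x y Hxy.
    pose proof (incr_of_deriv F (fun _ => 0) x y HF ltac:(intros; lra) x y) as H1.
    pose proof (decr_of_deriv F (fun _ => 0) x y HF ltac:(intros; lra) x y) as H2.
    specialize (H1 ltac:(lra) ltac:(lra) ltac:(lra)).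
    specialize (H2 ltac:(lra) ltac:(lra) ltac:(lra)). lra. }
  intros x y. destruct (Rle_dec x y); [|symmetry]; apply Hle; lra.
Qed.

Lemma RInt_derive (m : R -> R) t :
  (forall s, continuous m s) -> is_derive (fun t => RInt m 0 t) t (m t).
Proof.
  intros Hm. apply (is_derive_RInt m (fun t => RInt m 0 t) 0 t); [|apply Hm].
  apply filter_forall. intros b. apply (@RInt_correct R_CompleteNormedModule).
  apply (@ex_RInt_continuous R_CompleteNormedModule). intros; apply Hm.
Qed.

Lemma linear_ode (y m : R -> R) :
  (forall t, is_derive y t (m t * y t)) -> (forall t, continuous m t) ->
  forall t, y t = y 0 * exp (RInt m 0 t).
Proof.
  intros Hy Hm t.
  set (M := fun t => RInt m 0 t).
  assert (HM : forall s, is_derive M s (m s)) by (intros; apply RInt_derive, Hm).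
  assert (Hz : forall s, is_derive (fun s => y s * exp (- M s)) s 0).
  { intros s. auto_derive.
    - split; [exists (m s * y s); apply Hy|split; [exists (m s); apply HM|exact I]].
    - replace (Derive (fun x : R => y x) s) with (m s * y s)
        by (symmetry; apply is_derive_unique, Hy).
      replace (Derive (fun x : R => M x) s) with (m s)
        by (symmetry; apply is_derive_unique, HM).
      ring. }
  pose proof (const_of_deriv0 _ Hz t 0) as E. cbv beta in E.
  assert (M0 : M 0 = 0) by (unfold M; rewrite RInt_point; reflexivity).
  rewrite M0, Ropp_0, exp_0, Rmult_1_r in E. rewrite <- E, Rmult_assoc, <- exp_plus.
  fold (M t). replace (- M t + M t) with 0 by ring. rewrite exp_0; ring.
Qed.

Lemma continuous_comp_global (phi u : R -> R) t :
  continuity phi -> continuous u t -> continuous (fun s => phi (u s)) t.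
Proof.
  intros Hphi Hu. apply (continuous_comp u phi); [exact Hu|].
  apply continuity_pt_filterlim, Hphi.
Qed.

Lemma trapped (u : R -> R) a b :
  (forall t, continuous u t) -> a < u 0 < b ->
  (forall t, u t <> a /\ u t <> b) -> forall t, a < u t < b.
Proof.
  intros Hc H0 Hn t.
  assert (Hcc : continuity u) by (intros x; apply continuity_pt_filterlim, Hc).
  destruct (Rlt_le_dec a (u t)); destruct (Rlt_le_dec (u t) b);
    [split; assumption| | |lra].
  - destruct (IVT_gen u 0 t b Hcc) as [x [_ Hx]].
    { pose proof (Rmin_l (u 0) (u t)). pose proof (Rmax_r (u 0) (u t)). split; lra. }
    destruct (Hn x); congruence.
  - destruct (IVT_gen u 0 t a Hcc) as [x [_ Hx]].
    { pose proof (Rmin_r (u 0) (u t)). pose proof (Rmax_l (u 0) (u t)). split; lra. }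
    destruct (Hn x); congruence.
Qed.

(* sin x / x, extended by 1 at 0; it removes the apparent singularity of
   f and g at the origin. *)
Definition sinc (x : R) : R := if Req_EM_T x 0 then 1 else sin x / x.

Lemma sinc_mul x : x * sinc x = sin x.
Proof. unfold sinc; destruct (Req_EM_T x 0); [subst; rewrite sin_0; ring|field; auto]. Qed.

(* At 0 this is the limit sin x / x -> 1, i.e. sin'(0) = cos 0. *)
Lemma sinc_continuous : continuity sinc.
Proof.
  intros x. destruct (Req_EM_T x 0) as [->|Hx].
  - intros eps Heps.
    destruct (derivable_pt_lim_sin 0 eps Heps) as [d Hd].
    exists d; split; [apply cond_pos|].
    intros y [[_ Hy0] Hyd]. simpl in *. unfold R_dist in *.
    unfold sinc. destruct (Req_EM_T 0 0); [|congruence].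
    destruct (Req_EM_T y 0) as [->|Hy]; [congruence|].
    rewrite Rminus_0_r in Hyd. specialize (Hd y Hy Hyd).
    rewrite cos_0, sin_0, Rplus_0_l, Rminus_0_r in Hd. exact Hd.
  - apply continuity_pt_filterlim, continuous_ext_loc with (g := fun y => sin y * / y).
    + assert (Hp : 0 < Rabs x) by (apply Rabs_pos_lt; auto).
      exists (mkposreal _ Hp). intros y Hy.
      unfold ball in Hy; simpl in Hy; unfold AbsRing_ball, abs, minus, plus, opp in Hy; simpl in Hy.
      unfold sinc. destruct (Req_EM_T y 0) as [->|]; [|reflexivity].
      rewrite Rplus_0_l, Rabs_Ropp in Hy. lra.
    + apply (@continuous_mult R_UniformSpace R_AbsRing sin (fun y => / y)).
      * apply continuity_pt_filterlim, continuity_sin.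
      * apply continuous_Rinv; auto.
Qed.

(* The denominator (x + cos x sin x)/x shared by f and g, made regular at 0. *)
Definition denom (x : R) : R := 1 + cos x * sinc x.

(* x + cos x sin x = x + sin(2x)/2 > 0 for x > 0. *)
Lemma shifted_sin_pos y : 0 < y -> 0 < y + cos y * sin y.
Proof.
  intros Hy. replace (cos y * sin y) with (sin (2 * y) / 2) by (rewrite sin_2a; field).
  pose proof (SIN_bound (2 * y)). destruct (Rlt_le_dec (2 * y) PI).
  - assert (0 < sin (2 * y)) by (apply sin_gt_0; lra). lra.
  - pose proof PI2_1. lra.
Qed.

Lemma denom_pos x : 0 < denom x.
Proof.
  unfold denom, sinc. destruct (Req_EM_T x 0) as [->|Hx]; [rewrite cos_0; lra|].
  destruct (Rlt_le_dec 0 x) as [Hpos|Hneg].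
  - replace (1 + cos x * (sin x / x)) with ((x + cos x * sin x) / x) by (field; auto).
    apply Rdiv_lt_0_compat; [apply shifted_sin_pos|]; lra.
  - pose proof (shifted_sin_pos (- x) ltac:(lra)) as H.
    rewrite cos_neg, sin_neg in H.
    replace (1 + cos x * (sin x / x)) with ((- x + cos x * - sin x) / - x) by (field; auto).
    apply Rdiv_lt_0_compat; lra.
Qed.

Lemma denom_continuous : continuity denom.
Proof.
  apply (continuity_plus (fun _ => 1) (fun x => cos x * sinc x)).
  - apply continuity_const. intros ? ?; reflexivity.
  - apply (continuity_mult cos sinc); [apply continuity_cos|apply sinc_continuous].
Qed.

Lemma continuity_over_denom (p : R -> R) :
  continuity p -> continuity (fun x => p x / denom x).
Proof.
  intros Hp. apply (continuity_mult p (fun x => / denom x)); [exact Hp|].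
  apply (continuity_inv denom); [apply denom_continuous|].
  intros x. pose proof (denom_pos x). lra.
Qed.

Lemma denom_eq x : x <> 0 -> denom x = (x + cos x * sin x) / x.
Proof. intros Hx. unfold denom, sinc. destruct (Req_EM_T x 0); [contradiction|field; auto]. Qed.

Lemma f_eq x : f_vf x = - (sin x * cos x) / denom x.
Proof.
  pose proof (denom_pos x) as Hd. unfold f_vf.
  destruct (Req_EM_T x 0) as [->|Hx]; [rewrite sin_0; field; lra|].
  rewrite (denom_eq x Hx) in *.
  assert (x + cos x * sin x <> 0).
  { intros E. rewrite E in Hd. unfold Rdiv in Hd. lra. }
  field; auto.
Qed.

Lemma g_eq x : g_vf x = - cos x * (cos x + sinc x) / denom x.
Proof.
  pose proof (denom_pos x) as Hd. unfold g_vf.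
  destruct (Req_EM_T x 0) as [->|Hx].
  - unfold denom, sinc. destruct (Req_EM_T 0 0); [|congruence]. rewrite cos_0. field.
  - rewrite (denom_eq x Hx) in *. unfold sinc. destruct (Req_EM_T x 0); [contradiction|].
    assert (x + cos x * sin x <> 0).
    { intros E. rewrite E in Hd. unfold Rdiv in Hd. lra. }
    field; auto.
Qed.

Lemma g_continuous : continuity g_vf.
Proof.
  intros x. apply (continuity_pt_ext (fun x => - cos x * (cos x + sinc x) / denom x)).
  { intros y. symmetry. apply g_eq. }
  apply (continuity_over_denom (fun x => - cos x * (cos x + sinc x))).
  apply (continuity_mult (fun x => - cos x) (fun x => cos x + sinc x)).
  - apply (continuity_opp cos), continuity_cos.
  - apply (continuity_plus cos sinc); [apply continuity_cos|apply sinc_continuous].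
Qed.

Lemma g_nonpos_at_equilibrium x : sin x * cos x = 0 -> g_vf x <= 0.
Proof.
  intros Hsc. rewrite g_eq. pose proof (denom_pos x) as Hd.
  assert (Hnum : 0 <= cos x * (cos x + sinc x)).
  { destruct (Rmult_integral _ _ Hsc) as [Hs|Hc].
    - unfold sinc. destruct (Req_EM_T x 0) as [->|Hx].
      + rewrite cos_0. lra.
      + rewrite Hs. unfold Rdiv. rewrite Rmult_0_l, Rplus_0_r. nra.
    - rewrite Hc. lra. }
  unfold Rdiv. pose proof (Rinv_0_lt_compat _ Hd). nra.
Qed.

(* The function h(x) = x sin x, whose evolution along the flow is governed
   by g, and its derivative. *)
Definition h (x : R) : R := x * sin x.
Definition dh (x : R) : R := sin x + x * cos x.

Lemma h_derive x : is_derive h x (dh x).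
Proof. unfold h, dh. auto_derive; [exact I|ring]. Qed.

Section FlowLine.

Variables (r : R) (u : R -> R).
Hypothesis flow : is_flow_line r u.

Lemma flow_start : u 0 = r.
Proof. apply flow. Qed.

Lemma flow_continuous t : continuous u t.
Proof.
  apply (@ex_derive_continuous R_AbsRing R_NormedModule u).
  exists (f_vf (u t)). apply flow.
Qed.

Lemma flow_linear_quantity (Y dY k : R -> R) :
  (forall x, is_derive Y x (dY x)) -> continuity k ->
  (forall x, f_vf x * dY x = k x * Y x) ->
  forall t, Y (u t) = Y r * exp (RInt (fun s => k (u s)) 0 t).
Proof.
  intros HY Hk Hrel t. rewrite <- flow_start.
  apply (linear_ode (fun s => Y (u s)) (fun s => k (u s))).
  - intros s. rewrite <- Hrel.
    apply (is_derive_comp Y u); [apply HY|apply flow].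
  - intros s. apply continuous_comp_global; [exact Hk|apply flow_continuous].
Qed.

(* The product sin u cos u keeps its sign: its logarithmic derivative is
   -(cos^2 - sin^2)/denom. *)
Lemma flow_sin_cos t :
  exists E, 0 < E /\ sin (u t) * cos (u t) = sin r * cos r * E.
Proof.
  set (k := fun x => - (cos x * cos x - sin x * sin x) / denom x).
  assert (Hk : continuity k).
  { apply (continuity_over_denom (fun x => - (cos x * cos x - sin x * sin x))).
    apply (continuity_opp (fun x => cos x * cos x - sin x * sin x)).
    apply (continuity_minus (fun x => cos x * cos x) (fun x => sin x * sin x));
      apply continuity_mult; (apply continuity_cos || apply continuity_sin). }
  eexists. split; [apply exp_pos|].
  apply (flow_linear_quantity (fun x => sin x * cos x)
           (fun x => cos x * cos x - sin x * sin x) k); [|exact Hk|].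
  - intros x. auto_derive; [exact I|ring].
  - intros x. unfold k. rewrite f_eq. pose proof (denom_pos x). field. lra.
Qed.

Lemma flow_h t : h (u t) = h r * exp (G_along u t).
Proof.
  apply (flow_linear_quantity h dh g_vf h_derive g_continuous).
  intros x. rewrite f_eq, g_eq. unfold h, dh. rewrite <- (sinc_mul x).
  pose proof (denom_pos x). field. lra.
Qed.

Lemma flow_speed_sign t :
  exists E, 0 < E /\ f_vf (u t) = - (sin r * cos r) * E.
Proof.
  destruct (flow_sin_cos t) as [E [HE Hsc]].
  exists (E / denom (u t)). pose proof (denom_pos (u t)). split.
  - apply Rdiv_lt_0_compat; assumption.
  - rewrite f_eq, Hsc. field. lra.
Qed.

Lemma flow_moves_left t : 0 < sin r * cos r -> 0 <= t -> u t <= r.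
Proof.
  intros Hsc Ht. rewrite <- flow_start.
  apply (decr_of_deriv u (fun s => f_vf (u s)) 0 t); try lra; [apply flow|].
  intros s _. destruct (flow_speed_sign s) as [E [HE ->]]. nra.
Qed.

Lemma flow_moves_right t : sin r * cos r < 0 -> 0 <= t -> r <= u t.
Proof.
  intros Hsc Ht. rewrite <- flow_start.
  apply (incr_of_deriv u (fun s => f_vf (u s)) 0 t); try lra; [apply flow|].
  intros s _. destruct (flow_speed_sign s) as [E [HE ->]]. nra.
Qed.

Lemma flow_equilibrium t : sin r * cos r = 0 -> u t = r.
Proof.
  intros Hsc. rewrite <- flow_start. apply const_of_deriv0. intros s.
  destruct (flow_speed_sign s) as [E [_ Hf]]. rewrite Hsc in Hf.
  replace 0 with (f_vf (u s)) by lra. apply flow.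
Qed.

Lemma flow_trapped a b t :
  a < r < b -> sin a * cos a = 0 -> sin b * cos b = 0 -> sin r * cos r <> 0 ->
  a < u t < b.
Proof.
  intros Hr Ha Hb Hsc. apply trapped; [apply flow_continuous|rewrite flow_start; exact Hr|].
  intros s. destruct (flow_sin_cos s) as [E [HE Hs]].
  assert (Hne : sin (u s) * cos (u s) <> 0).
  { rewrite Hs. apply Rmult_integral_contrapositive. split; [exact Hsc|lra]. }
  split; intros Heq; rewrite Heq in Hne; contradiction.
Qed.

Lemma G_at_equilibrium t : sin r * cos r = 0 -> G_along u t = g_vf r * t.
Proof.
  intros Hsc. unfold G_along.
  rewrite (RInt_ext _ (fun _ => g_vf r)).
  - rewrite RInt_const. unfold scal; simpl; unfold mult; simpl. ring.
  - intros s _. rewrite (flow_equilibrium s Hsc). reflexivity.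
Qed.

End FlowLine.

Lemma dh_derive x : is_derive dh x (2 * cos x - x * sin x).
Proof. unfold dh. auto_derive; [exact I|ring]. Qed.

Lemma h_half_pi : h (PI / 2) = PI / 2.
Proof. unfold h. rewrite sin_PI2. ring. Qed.

Lemma h_incr_first_quarter x y : 0 <= x -> x <= y -> y <= PI / 2 -> h x <= h y.
Proof.
  apply (incr_of_deriv h dh 0 (PI / 2) h_derive).
  intros z Hz. unfold dh.
  assert (0 < sin z) by (apply sin_gt_0; lra).
  assert (0 < cos z) by (apply cos_gt_0; lra). nra.
Qed.

Lemma h_decr_third_quarter x y : PI <= x -> x <= y -> y <= 3 * (PI / 2) -> h y <= h x.
Proof.
  apply (decr_of_deriv h dh PI (3 * (PI / 2)) h_derive).
  intros z Hz. unfold dh. pose proof PI_RGT_0.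
  assert (sin z < 0) by (apply sin_lt_0; lra).
  assert (cos z < 0) by (apply cos_lt_0; lra). nra.
Qed.

Lemma dh_decr_second_quarter x y : PI / 2 <= x -> x < y -> y <= PI -> dh y < dh x.
Proof.
  intros Hx Hxy Hy.
  destruct (mvt_open dh (fun x => 2 * cos x - x * sin x) x y Hxy dh_derive) as [c [Hc E]].
  assert (cos c < 0) by (apply cos_lt_0; lra).
  assert (0 < sin c) by (apply sin_gt_0; lra).
  assert (2 * cos c - c * sin c < 0) by nra.
  nra.
Qed.

(* On the first quarter the flow moves left while h increases there, so
   h(u(t)) <= h(r) and G(r, t) <= 0. *)
Lemma exp_G_le_1_first_quarter r u t :
  0 < r < PI / 2 -> is_flow_line r u -> 0 <= t -> exp (G_along u t) <= 1.
Proof.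
  intros Hr Hf Ht.
  assert (0 < sin r) by (apply sin_gt_0; lra).
  assert (0 < cos r) by (apply cos_gt_0; lra).
  assert (Hsc : 0 < sin r * cos r) by nra.
  assert (Hhr : 0 < h r) by (unfold h; nra).
  pose proof (flow_moves_left r u Hf t Hsc Ht).
  pose proof (flow_trapped r u Hf 0 (PI / 2) t Hr
                ltac:(rewrite sin_0; ring) ltac:(rewrite cos_PI2; ring) ltac:(lra)).
  pose proof (h_incr_first_quarter (u t) r ltac:(lra) ltac:(lra) ltac:(lra)).
  pose proof (flow_h r u Hf t). nra.
Qed.

(* On the third quarter the flow moves left while h < 0 decreases there, so
   h(r) <= h(u(t)) < 0 and G(r, t) <= 0. *)
Lemma exp_G_le_1_third_quarter r u t :
  PI < r < 3 * (PI / 2) -> is_flow_line r u -> 0 <= t -> exp (G_along u t) <= 1.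
Proof.
  intros Hr Hf Ht. pose proof PI_RGT_0.
  assert (sin r < 0) by (apply sin_lt_0; lra).
  assert (cos r < 0) by (apply cos_lt_0; lra).
  assert (Hsc : 0 < sin r * cos r) by nra.
  assert (Hhr : h r < 0) by (unfold h; nra).
  pose proof (flow_moves_left r u Hf t Hsc Ht).
  pose proof (flow_trapped r u Hf PI (3 * (PI / 2)) t Hr
                ltac:(rewrite sin_PI; ring) ltac:(rewrite cos_3PI2; ring) ltac:(lra)).
  pose proof (h_decr_third_quarter (u t) r ltac:(lra) ltac:(lra) ltac:(lra)).
  pose proof (flow_h r u Hf t). nra.
Qed.

(* At an equilibrium, G(r, t) = g(r) t <= 0. *)
Lemma exp_G_le_1_equilibrium r u t :
  is_flow_line r u -> sin r * cos r = 0 -> 0 <= t -> exp (G_along u t) <= 1.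
Proof.
  intros Hf Hsc Ht. rewrite (G_at_equilibrium r u Hf t Hsc), <- exp_0.
  pose proof (g_nonpos_at_equilibrium r Hsc).
  destruct (Rle_lt_or_eq_dec (g_vf r * t) 0) as [Hlt|Heq]; [nra| |].
  - left. apply exp_increasing, Hlt.
  - rewrite Heq. lra.
Qed.

Ltac expand_sin_approx H :=
  unfold sin_approx, sin_term in H; cbn [sum_f_R0 Nat.mul Nat.add] in H;
  repeat rewrite fact_simpl in H; repeat rewrite mult_INR in H;
  cbn [INR pow Factorial.fact] in H.

(* pi to four decimals, from the alternating arctangent series for pi/4. *)
Lemma PI_bounds : 3.14159 < PI < 3.1416.
Proof.
  destruct (PI_2_3_7_ineq 2) as [Hlo Hhi].
  unfold PI_2_3_7_tg, tg_alt, Ratan_seq in *. simpl in *. lra.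
Qed.

(* cos x = 1 - 2 sin^2 (x/2), to bound cos by the Taylor bounds of sin. *)
Lemma cos_half_angle x : cos x = 1 - 2 * sin (x / 2) * sin (x / 2).
Proof. rewrite <- cos_2a_sin. f_equal. field. Qed.

(* dh changes sign on [2.025, 2.035], which locates r_M. *)
Lemma dh_2025_pos : 0 < dh 2.025.
Proof.
  unfold dh. rewrite (cos_half_angle 2.025).
  destruct (pre_sin_bound 2.025 2) as [Hs _]; [lra|lra|].
  destruct (pre_sin_bound (2.025 / 2) 2) as [Hlo Hhi]; [lra|lra|].
  expand_sin_approx Hs. expand_sin_approx Hlo. expand_sin_approx Hhi. nra.
Qed.

Lemma dh_2035_neg : dh 2.035 < 0.
Proof.
  unfold dh. rewrite (cos_half_angle 2.035).
  destruct (pre_sin_bound 2.035 2) as [_ Hs]; [lra|lra|].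
  destruct (pre_sin_bound (2.035 / 2) 2) as [Hlo _]; [lra|lra|].
  expand_sin_approx Hs. expand_sin_approx Hlo. nra.
Qed.

(* Used to bound h(r_M) < 7 pi / 12. *)
Lemma sin_2025_bound : 2.035 * sin 2.025 < 7 * 3.14159 / 12.
Proof.
  destruct (pre_sin_bound 2.025 2) as [_ Hs]; [lra|lra|].
  expand_sin_approx Hs. lra.
Qed.

Section CriticalPoint.

Variable rM : R.
Hypothesis rM_range : PI / 2 < rM < PI.
Hypothesis rM_critical : dh rM = 0.

Lemma dh_pos_before_critical z : PI / 2 <= z < rM -> 0 < dh z.
Proof. intros Hz. rewrite <- rM_critical. apply dh_decr_second_quarter; lra. Qed.

Lemma dh_neg_after_critical z : rM < z <= PI -> dh z < 0.
Proof. intros Hz. rewrite <- rM_critical. apply dh_decr_second_quarter; lra. Qed.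

Lemma h_decr_after_critical x y : rM <= x -> x <= y -> y <= PI -> h y <= h x.
Proof.
  apply (decr_of_deriv h dh rM PI h_derive).
  intros z Hz. pose proof (dh_neg_after_critical z ltac:(lra)). lra.
Qed.

Lemma h_max_at_critical x : PI / 2 <= x <= PI -> h x <= h rM.
Proof.
  intros Hx. destruct (Rle_dec x rM) as [Hle|Hgt].
  - apply (incr_of_deriv h dh (PI / 2) rM h_derive); try lra.
    intros z Hz. pose proof (dh_pos_before_critical z ltac:(lra)). lra.
  - apply h_decr_after_critical; lra.
Qed.

Lemma h_above_half x : PI / 2 < x <= rM -> PI / 2 < h x.
Proof.
  intros Hx. rewrite <- h_half_pi.
  destruct (mvt_open h dh (PI / 2) x ltac:(lra) h_derive) as [c [Hc E]].
  pose proof (dh_pos_before_critical c ltac:(lra)). nra.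
Qed.

Lemma rM_bounds : 2.025 < rM < 2.035.
Proof.
  pose proof PI_bounds. pose proof dh_2025_pos. pose proof dh_2035_neg. split.
  - destruct (Rlt_le_dec 2.025 rM) as [|Hle]; [assumption|exfalso].
    destruct (Req_dec rM 2.025) as [Heq|Hne]; [rewrite Heq in rM_critical; lra|].
    pose proof (dh_neg_after_critical 2.025 ltac:(lra)). lra.
  - destruct (Rlt_le_dec rM 2.035) as [|Hle]; [assumption|exfalso].
    destruct (Req_dec rM 2.035) as [Heq|Hne]; [rewrite Heq in rM_critical; lra|].
    pose proof (dh_pos_before_critical 2.035 ltac:(lra)). lra.
Qed.

Lemma critical_value_bounds : 1 < 2 * h rM / PI < 7 / 6.
Proof.
  pose proof PI_bounds. pose proof rM_bounds. pose proof sin_2025_bound.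
  pose proof (h_above_half rM ltac:(lra)).
  assert (sin rM <= sin 2.025) by (apply sin_decr_1; lra).
  assert (0 < sin rM) by (apply sin_gt_0; lra).
  assert (h rM < 7 * PI / 12) by (unfold h; nra).
  split; apply (Rmult_lt_reg_r PI); try lra;
    unfold Rdiv; rewrite Rmult_assoc, Rinv_l; lra.
Qed.

(* On the second quarter the flow moves right.  Starting left of r_M, h(r)
   > pi/2 while h(u(t)) <= h(r_M); starting right of r_M, h decreases along
   the flow.  Either way exp G < 2 h(r_M) / pi. *)
Lemma exp_G_lt_second_quarter r u t :
  PI / 2 < r < PI -> is_flow_line r u -> 0 <= t -> exp (G_along u t) < 2 * h rM / PI.
Proof.
  intros Hr Hf Ht. pose proof critical_value_bounds as Hc.
  assert (0 < sin r) by (apply sin_gt_0; lra).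
  assert (cos r < 0) by (apply cos_lt_0; lra).
  assert (Hsc : sin r * cos r < 0) by nra.
  pose proof (flow_moves_right r u Hf t Hsc Ht).
  pose proof (flow_trapped r u Hf (PI / 2) PI t Hr
                ltac:(rewrite cos_PI2; ring) ltac:(rewrite sin_PI; ring) ltac:(lra)).
  pose proof (flow_h r u Hf t) as Hh. pose proof (exp_pos (G_along u t)).
  destruct (Rle_dec r rM) as [Hle|Hgt].
  - pose proof (h_above_half r ltac:(lra)).
    pose proof (h_max_at_critical (u t) ltac:(lra)).
    apply (Rmult_lt_reg_r (PI / 2)); [lra|].
    replace (2 * h rM / PI * (PI / 2)) with (h rM) by (field; lra). nra.
  - pose proof (h_decr_after_critical r (u t) ltac:(lra) ltac:(lra) ltac:(lra)).
    assert (0 < h r) by (unfold h; nra). nra.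
Qed.

Lemma exp_G_lt_critical_value r u t :
  0 <= r < 3 * (PI / 2) -> is_flow_line r u -> 0 <= t ->
  exp (G_along u t) < 2 * h rM / PI.
Proof.
  intros Hr Hf Ht. pose proof critical_value_bounds as Hc. pose proof PI_RGT_0.
  destruct (Req_dec (sin r * cos r) 0) as [Heq|Hne].
  { pose proof (exp_G_le_1_equilibrium r u t Hf Heq Ht). lra. }
  assert (r <> 0) by (intros ->; rewrite sin_0 in Hne; lra).
  assert (r <> PI / 2) by (intros ->; rewrite cos_PI2 in Hne; lra).
  assert (r <> PI) by (intros ->; rewrite sin_PI in Hne; lra).
  destruct (Rlt_le_dec r (PI / 2)).
  { pose proof (exp_G_le_1_first_quarter r u t ltac:(lra) Hf Ht). lra. }
  destruct (Rlt_le_dec r PI).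
  { apply (exp_G_lt_second_quarter r u t); [lra|exact Hf|exact Ht]. }
  pose proof (exp_G_le_1_third_quarter r u t ltac:(lra) Hf Ht). lra.
Qed.

End CriticalPoint.

Lemma critical_of_tan x : PI / 2 < x < PI -> x = - tan x -> dh x = 0.
Proof.
  intros Hx E. assert (cos x < 0) by (apply cos_lt_0; lra).
  unfold dh. rewrite E at 2. unfold tan. field. lra.
Qed.

Lemma critical_point_exists : exists rM, PI / 2 < rM < PI /\ rM = - tan rM.
Proof.
  pose proof PI_bounds. pose proof dh_2025_pos. pose proof dh_2035_neg.
  assert (Hc : continuity dh).
  { intros x. apply continuity_pt_filterlim.
    apply (@ex_derive_continuous R_AbsRing R_NormedModule dh).
    eexists. apply dh_derive. }
  destruct (IVT_gen dh 2.025 2.035 0 Hc) as [x [Hx E]].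
  { rewrite Rmin_right, Rmax_left; lra. }
  rewrite Rmin_left, Rmax_right in Hx by lra.
  exists x. split; [lra|].
  assert (cos x < 0) by (apply cos_lt_0; lra).
  unfold dh in E. unfold tan. replace (sin x) with (- x * cos x) by lra. field. lra.
Qed.

Theorem mainTheorem7 (delta0 : R) :
  0 < delta0 < PI / 2 ->
  (exists rM : R, PI / 2 < rM < PI /\ rM = - tan rM) /\
  forall (r : R) (u : R -> R),
    0 <= r < PI + delta0 ->
    is_flow_line r u ->
    forall t : R, 0 <= t ->
      G_along u t < ln (7 / 6) /\
      (forall rM : R, PI / 2 < rM < PI -> rM = - tan rM ->
         G_along u t < ln (2 * rM * sin rM / PI) /\
         ln (2 * rM * sin rM / PI) < ln (7 / 6)).
Proof.
  intros Hd0. split; [exact critical_point_exists|].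
  intros r u Hr Hf t Ht.
  assert (Hbound : forall rM, PI / 2 < rM < PI -> rM = - tan rM ->
            G_along u t < ln (2 * rM * sin rM / PI) /\ ln (2 * rM * sin rM / PI) < ln (7 / 6)).
  { intros rM HrM Htan.
    pose proof (critical_of_tan rM HrM Htan) as Hcrit.
    pose proof (critical_value_bounds rM HrM Hcrit) as Hc.
    pose proof (exp_G_lt_critical_value rM HrM Hcrit r u t ltac:(lra) Hf Ht) as HG.
    replace (2 * rM * sin rM) with (2 * h rM) by (unfold h; ring).
    split; [|apply ln_increasing; lra].
    rewrite <- (ln_exp (G_along u t)). apply ln_increasing; [apply exp_pos|exact HG]. }
  split; [|exact Hbound].
  destruct critical_point_exists as [rM [HrM Htan]].
  destruct (Hbound rM HrM Htan). lra.
Qed.
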